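(* Let $R$ be an $L$-layered domain$^\dagger$ and suppose $L=L_{\ge 1}$, i.e. $\ell\ge 1$ for every $\ell\in L$ (for example $L=\mathbb{N}$). Then every invertible element $a$ of $R$ is tangible, i.e. $a\in R_1$.
   Context: A semiring$^\dagger$ is a structure $(L,+,\cdot,1)$ with $(L,\cdot,1)$ a monoid, $(L,+)$ an abelian semigroup, and two-sided distributivity (no zero element required). $L$ has a designated sub-semiring$^\dagger$ $L_+$ of positive elements with $1\in L_+$; $k\ge\ell$ means $k=\ell$ or $k=\ell+p$ with $p\in L_+$, assumed to be a partial order; $L_{\ge1}=\{\ell\in L:\ell\ge 1\}$. An $L$-quasi-layered domain$^\dagger$ is a commutative semiring$^\dagger$ $R$ with a decomposition into disjoint subsets $R=\bigsqcup_{\ell\in L}R_\ell$ and sort transition maps $\nu_{m,\ell}:R_\ell\to R_m$ ($m\ge\ell$) with $\nu_{\ell,\ell}=\mathrm{id}$, $\nu_{m,\ell}\circ\nu_{\ell,k}=\nu_{m,k}$, satisfying: (A1) $\mathbb{1}_R\in R_1$; (A2) $R_kR_\ell\subseteq R_{k\ell}$; (A3) $\nu_{m,k}(a)\nu_{m',\ell}(b)=\nu_{mm',k\ell}(ab)$; (A4) $\nu_{\ell,k}(a)+\nu_{\ell',k}(a)=\nu_{\ell+\ell',k}(a)$; (B) if $a\in R_k$, $b\in R_\ell$, $a\cong_\nu b$ then $a+b\in R_{k+\ell}$ and $a+b\cong_\nu a$ (and $a+b=a$ if $k+p=k$ for some $p\in L_+$). Here $a\cong_\nu b$ means $\nu_{m,k}(a)=\nu_{m,\ell}(b)$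 for some $m\ge k,\ell$. An $L$-layered domain$^\dagger$ is such an $R$ which is $\nu$-bipotent: writing $a\le_\nu b$ iff $a+b\cong_\nu b$, for $a\not\cong_\nu b$ either $a<_\nu b$ or $b<_\nu a$, and $a<_\nu b$ implies $a+b=b$. Elements of $R_1$ are tangible. *)

Set Implicit Arguments.

Record semiring_dagger (T : Type) (add mul : T -> T -> T) (one : T) : Prop := {
  sd_mulA : forall x y z, mul x (mul y z) = mul (mul x y) z;
  sd_mul1l : forall x, mul one x = x;
  sd_mul1r : forall x, mul x one = x;
  sd_addA : forall x y z, add x (add y z) = add (add x y) z;
  sd_addC : forall x y, add x y = add y x;
  sd_mulDl : forall x y z, mul (add x y) z = add (mul x z) (mul y z);
  sd_mulDr : forall x y z, mul x (add y z) = add (mul x y) (mul x z)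
}.

Record sorting_semiring := {
  Lcar :> Type;
  Ladd : Lcar -> Lcar -> Lcar;
  Lmul : Lcar -> Lcar -> Lcar;
  Lone : Lcar;
  Lpos : Lcar -> Prop;
  L_semiring : semiring_dagger Ladd Lmul Lone;
  Lpos_one : Lpos Lone;
  Lpos_add : forall p q, Lpos p -> Lpos q -> Lpos (Ladd p q);
  Lpos_mul : forall p q, Lpos p -> Lpos q -> Lpos (Lmul p q);
  (* antisymmetry of >= (reflexivity and transitivity are automatic) *)
  Lge_antisym : forall k l,
    (k = l \/ exists p, Lpos p /\ k = Ladd l p) ->
    (l = k \/ exists p, Lpos p /\ l = Ladd k p) -> k = l
}.

Definition Lge (L : sorting_semiring) (k l : L) : Prop :=
  k = l \/ exists p, Lpos L p /\ k = Ladd L l p.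

Definition nu_cong {L : sorting_semiring} {R : Type} (sort : R -> L)
  (nu : L -> L -> R -> R) (a b : R) : Prop :=
  exists m, Lge L m (sort a) /\ Lge L m (sort b) /\
            nu m (sort a) a = nu m (sort b) b.

Definition nu_le {L : sorting_semiring} {R : Type} (add : R -> R -> R)
  (sort : R -> L) (nu : L -> L -> R -> R) (a b : R) : Prop :=
  nu_cong sort nu (add a b) b.

Definition nu_lt {L : sorting_semiring} {R : Type} (add : R -> R -> R)
  (sort : R -> L) (nu : L -> L -> R -> R) (a b : R) : Prop :=
  nu_le add sort nu a b /\ ~ nu_cong sort nu a b.

(* The decomposition R = disjoint union of the
   R_l is encoded by the sort function [sort] (a \in R_l iff sort a = l);
   the transition maps nu_{m,l} : R_l -> R_m (m >= l) are encoded by a single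
   function [nu m l], whose behaviour is only constrained on R_l for m >= l. *)
Record layered_domain (L : sorting_semiring) := {
  Rcar :> Type;
  Radd : Rcar -> Rcar -> Rcar;
  Rmul : Rcar -> Rcar -> Rcar;
  Rone : Rcar;
  sort : Rcar -> L;
  nu : L -> L -> Rcar -> Rcar;
  R_semiring : semiring_dagger Radd Rmul Rone;
  R_mulC : forall x y, Rmul x y = Rmul y x;
  nu_sort : forall m l a, sort a = l -> Lge L m l -> sort (nu m l a) = m;
  nu_id : forall l a, sort a = l -> nu l l a = a;
  nu_comp : forall m l k a, sort a = k -> Lge L l k -> Lge L m l ->
     nu m l (nu l k a) = nu m k a;
  ax_A1 : sort Rone = Lone L;
  ax_A2 : forall a b, sort (Rmul a b) = Lmul L (sort a) (sort b);
  ax_A3 : forall m m' k l a b, sort a = k -> sort b = l ->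
     Lge L m k -> Lge L m' l ->
     Rmul (nu m k a) (nu m' l b) = nu (Lmul L m m') (Lmul L k l) (Rmul a b);
  ax_A4 : forall l l' k a, sort a = k -> Lge L l k -> Lge L l' k ->
     Radd (nu l k a) (nu l' k a) = nu (Ladd L l l') k a;
  ax_B : forall a b, nu_cong sort nu a b ->
     sort (Radd a b) = Ladd L (sort a) (sort b) /\
     nu_cong sort nu (Radd a b) a /\
     ((exists p, Lpos L p /\ Ladd L (sort a) p = sort a) -> Radd a b = a);
  ax_bipotent : forall a b, ~ nu_cong sort nu a b ->
     nu_lt Radd sort nu a b \/ nu_lt Radd sort nu b a;
  ax_lt_add : forall a b, nu_lt Radd sort nu a b -> Radd a b = b
}.

Definition tangible {L : sorting_semiring} {R : layered_domain L} (a : R) : Prop :=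
  sort R a = Lone L.


Set Implicit Arguments.

(* The sort map is multiplicative, so [a b = 1] gives [sort a * sort b = 1]
   in L.  When every sort is [>= 1], say [sort a = 1 + p], this reads
   [sort b + p (sort b) = 1], i.e. [1 >= sort b >= 1]; antisymmetry forces
   [sort b = 1] and then [sort a = sort a * sort b = 1]. *)

Section SortingSemiring.

Variable L : sorting_semiring.

Lemma Lpos_ge_one (l : L) : Lge L l (Lone L) -> Lpos L l.
Proof.
  intros [-> | [q [Hq ->]]].
  - apply Lpos_one.
  - apply Lpos_add; [apply Lpos_one | exact Hq].
Qed.

Lemma Lmul_eq_one_ge_one_r (k l : L) :
  Lge L k (Lone L) -> Lge L l (Lone L) -> Lmul L k l = Lone L -> l = Lone L.
Proof.
  intros Hk Hl Hkl.
  pose proof (L_semiring L) as S.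
  destruct Hk as [-> | [p [Hp ->]]].
  - rewrite (sd_mul1l S) in Hkl; exact Hkl.
  - rewrite (sd_mulDl S), (sd_mul1l S) in Hkl.
    apply (Lge_antisym L); [exact Hl |].
    right; exists (Lmul L p l); split.
    + apply Lpos_mul; [exact Hp | apply Lpos_ge_one, Hl].
    + symmetry; exact Hkl.
Qed.

Lemma Lmul_eq_one_ge_one_l (k l : L) :
  Lge L k (Lone L) -> Lge L l (Lone L) -> Lmul L k l = Lone L -> k = Lone L.
Proof.
  intros Hk Hl Hkl.
  pose proof (L_semiring L) as S.
  rewrite (Lmul_eq_one_ge_one_r Hk Hl Hkl), (sd_mul1r S) in Hkl.
  exact Hkl.
Qed.

End SortingSemiring.

Lemma sort_mul_eq_one {L : sorting_semiring} {R : layered_domain L} {a b : R} :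
  Rmul R a b = Rone R -> Lmul L (sort R a) (sort R b) = Lone L.
Proof.
  intros Hab; rewrite <- ax_A2, Hab; apply ax_A1.
Qed.

Theorem lemma3p16 (L : sorting_semiring) (R : layered_domain L) :
  (forall l : L, Lge L l (Lone L)) ->
  forall a : R, (exists b : R, Rmul R a b = Rone R) -> tangible a.
Proof.
  intros Hge a [b Hab].
  exact (Lmul_eq_one_ge_one_l (Hge _) (Hge _) (sort_mul_eq_one Hab)).
Qed.
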